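(* Let $(\theta,\varphi)$ be a random dynamical system on $\mathbb{X}=\mathbb{N}_0^L$ as in the context, and let $A:\mathcal{Q}\to\mathcal{P}(\mathbb{X})$ be a $\varphi$-invariant random set with $A_q$ nonempty and finite for all $q$. Then the following are equivalent: (I) $A$ is a weak attractor: for every finite $B\subset\mathbb{X}$, $\mathrm{dist}(\varphi^n_q(B),A_{\theta^nq})\to0$ in probability as $n\to\infty$; (II) $A$ is a forward attractor: for every finite $B\subset\mathbb{X}$, $\lim_{n\to\infty}\mathrm{dist}(\varphi^n_q(B),A_{\theta^nq})=0$ $\mathbb{P}$-a.s.; (III) $A$ is a forward point attractor: the condition in (II) holds for every $B=\{x\}$, $x\in\mathbb{X}$; (IV) $A$ is a weak point attractor: the condition in (I) holds for every $B=\{x\}$, $x\in\mathbb{X}$; (V) for every finite random set $K:\mathcal{Q}\to\mathcal{P}(\mathbb{X})$, $\mathrm{dist}(\varphi^n_q(K_q),A_{\theta^nq})\to0$ in probability as $n\to\infty$.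
   Context: $(\mathcal{Q},\mathcal{F},\mathbb{P})$ is a probability space and $\theta:\mathcal{Q}\to\mathcal{Q}$ is an invertible, measurable, $\mathbb{P}$-preserving and $\mathbb{P}$-ergodic map; $\theta^n$ denotes its iterates ($n\in\mathbb{Z}$). $\varphi:\mathbb{N}_0\times\mathcal{Q}\times\mathbb{X}\to\mathbb{X}$, $(n,q,x)\mapsto\varphi^n_q(x)$, is measurable and satisfies the cocycle property $\varphi^0_q=\mathrm{id}$, $\varphi^{n+m}_q=\varphi^n_{\theta^mq}\circ\varphi^m_q$. $d$ is the Euclidean distance on $\mathbb{X}$, $d(x,B)=\inf_{y\in B}d(x,y)$, and $\mathrm{dist}(A,B)=\sup_{x\in A}d(x,B)$ for nonempty $A,B$. A random set is a map $K:\mathcal{Q}\to\mathcal{P}(\mathbb{X})$ with $q\mapsto d(x,K_q)$ measurable for each $x\in\mathbb{X}$; it is a finite random set if $K_q$ is nonempty and finite for all $q$. A random set $A$ is $\varphi$-invariant if $\varphi^n_q(A_q)=A_{\theta^nq}$ for all $n\in\mathbb{N}$, $\mathbb{P}$-a.s. *)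

From HB Require Import structures.
From mathcomp Require Import all_boot all_order all_algebra.
From mathcomp Require Import all_classical all_reals all_analysis.
From mathcomp Require Import measurable_realfun.
Set Implicit Arguments. Unset Strict Implicit. Unset Printing Implicit Defensive.
Import Order.TTheory GRing.Theory Num.Theory.
Import numFieldNormedType.Exports.
Local Open Scope classical_set_scope.
Local Open Scope ring_scope.

Definition stsp (L : nat) := 'I_L -> nat.

Definition edist {R : realType} {L : nat} (x y : stsp L) : R :=
  Num.sqrt (\sum_(i < L) ((x i)%:R - (y i)%:R) ^+ 2).

(* d(x,B) = inf_{y in B} d(x,y), in the extended reals (= +oo if B empty). *)
Definition dpt {R : realType} {L : nat} (x : stsp L) (B : set (stsp L)) : \bar R :=
  ereal_inf [set (edist x y)%:E | y in B].

Definition hdist {R : realType} {L : nat} (A B : set (stsp L)) : \bar R :=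
  ereal_sup [set dpt (R:=R) x B | x in A].

Definition mpds {d} {T : measurableType d} {R : realType}
    (P : probability T R) (th : T -> T) : Prop :=
  [/\ exists thinv : T -> T,
        [/\ cancel th thinv, cancel thinv th & measurable_fun setT thinv],
      measurable_fun setT th,
      (forall A, measurable A -> P (th @^-1` A) = P A) &
      (forall A, measurable A -> th @^-1` A = A -> P A = 0%E \/ P A = 1%E)].

(* phi : N_0 x Q x X -> X measurable (X, N_0 discrete and countable, so this
   is measurability of every fibre), with the cocycle property. *)
Definition cocycle {d} {T : measurableType d} {L : nat}
    (th : T -> T) (phi : nat -> T -> stsp L -> stsp L) : Prop :=
  [/\ (forall n x y, measurable [set q | phi n q x = y]),
      (forall q, phi 0%N q = id) &
      (forall n m q, phi (n + m)%N q = phi n (iter m th q) \o phi m q)].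

Definition random_set {d} {T : measurableType d} {R : realType} {L : nat}
    (K : T -> set (stsp L)) : Prop :=
  forall x, measurable_fun setT (fun q : T => (dpt x (K q) : \bar R)).

Definition finite_random_set {d} {T : measurableType d} {R : realType} {L : nat}
    (K : T -> set (stsp L)) : Prop :=
  random_set (R:=R) K /\ forall q, K q !=set0 /\ finite_set (K q).

Definition phi_invariant {d} {T : measurableType d} {R : realType} {L : nat}
    (P : probability T R) (th : T -> T) (phi : nat -> T -> stsp L -> stsp L)
    (A : T -> set (stsp L)) : Prop :=
  forall n, (0 < n)%N -> {ae P, forall q, phi n q @` A q = A (iter n th q)}.

Definition cvg_in_prob {d} {T : measurableType d} {R : realType}
    (P : probability T R) (Z : nat -> T -> \bar R) : Prop :=
  forall eps : R, 0 < eps ->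
    (fun n => P [set q | (eps%:E < Z n q)%E]) @ \oo --> 0%E.

Definition cvg_as {d} {T : measurableType d} {R : realType}
    (P : probability T R) (Z : nat -> T -> \bar R) : Prop :=
  {ae P, forall q, (fun n => Z n q) @ \oo --> 0%E}.

Definition attr_seq {d} {T : measurableType d} {R : realType} {L : nat}
    (th : T -> T) (phi : nat -> T -> stsp L -> stsp L)
    (A : T -> set (stsp L)) (K : T -> set (stsp L)) : nat -> T -> \bar R :=
  fun n q => hdist (R:=R) (phi n q @` K q) (A (iter n th q)).

(* On N_0^L distinct points are at Euclidean distance at least 1, so
   dist(phi^n_q(K_q), A_(theta^n q)) vanishes when phi^n_q(K_q) is contained
   in A_(theta^n q) and is at least 1 otherwise: almost sure convergence means
   that the trajectory is eventually absorbed by A, convergence in probability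
   that the probability of not being absorbed at time n tends to 0.
   Invariance at time 1, transported along the theta-orbit because theta
   preserves P, almost surely makes A forward invariant under the one-step
   maps, so by the cocycle property a point once absorbed stays absorbed.
   Weak point attraction makes the event "never absorbed" null; hence every
   point, and since X is countable almost surely all points at once, is
   eventually absorbed.  Finitely many points are then absorbed simultaneously,
   and almost sure absorption implies convergence in probability. *)

From Pilot Require Import Defs.
From HB Require Import structures.
From mathcomp Require Import all_boot all_order all_algebra.
From mathcomp Require Import all_classical all_reals all_analysis.
From mathcomp Require Import measurable_realfun.
Import Order.TTheory GRing.Theory Num.Theory.
Local Open Scope classical_set_scope.
Local Open Scope ring_scope.

Section lattice_distance.
Context {R : realType} {L : nat}.
Implicit Types (x y : stsp L) (S B : set (stsp L)).

Lemma edist_ge0 x y : 0 <= Defs.edist (R:=R) x y.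
Proof. exact: sqrtr_ge0. Qed.

Lemma edist_self x : Defs.edist (R:=R) x x = 0.
Proof. by rewrite /Defs.edist big1 ?sqrtr0 // => i _; rewrite subrr expr0n. Qed.

Lemma sqr_natrB_ge1 (a b : nat) : a != b -> 1 <= ((a%:R - b%:R) ^+ 2 : R).
Proof.
move=> ab; wlog lt_ab : a b ab / (a < b)%N => [wlog|].
  case: (ltngtP a b) => [lt_ab|lt_ba|eq_ab]; first exact: wlog.
    by rewrite -sqrrN opprB; apply: wlog; rewrite // eq_sym.
  by rewrite eq_ab eqxx in ab.
rewrite -sqrrN opprB -natrB; last exact: ltnW.
by apply: exprn_ege1; rewrite ler1n subn_gt0.
Qed.

Lemma edist_ge1 x y : x <> y -> 1 <= Defs.edist (R:=R) x y.
Proof.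
move=> xy; have [i /eqP xyi] : exists i, x i <> y i.
  by apply: contra_notP xy => /forallNP xy; apply/funext => i; apply: contrapT.
have sum_ge0 (F : pred 'I_L) :
    0 <= \sum_(j | F j) ((x j)%:R - (y j)%:R) ^+ 2 :> R.
  by apply: sumr_ge0 => j _; exact: sqr_ge0.
rewrite /Defs.edist -[X in X <= _]sqrtr1 ler_psqrt ?qualifE /= ?ler01 ?sum_ge0 //.
rewrite (bigD1 i) //= -[X in X <= _]addr0.
by apply: lerD; [exact: sqr_natrB_ge1 | exact: sum_ge0].
Qed.

Lemma dpt_eq0 x S : S x -> dpt (R:=R) x S = 0%E.
Proof.
move=> Sx; apply/eqP; rewrite eq_le; apply/andP; split.
  by apply: ereal_inf_lbound; exists x => //; rewrite edist_self.
by apply: le_ereal_inf_tmp => _ [y _ <-]; rewrite lee_fin edist_ge0.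
Qed.

Lemma dpt_ge1 x S : ~ S x -> (1 <= dpt (R:=R) x S)%E.
Proof.
move=> Sx; apply: le_ereal_inf_tmp => _ [y Sy <-]; rewrite lee_fin edist_ge1 //.
by move=> xy; apply: Sx; rewrite xy.
Qed.

Lemma dpt_lt1 x S : (dpt (R:=R) x S < 1)%E <-> S x.
Proof.
split=> [dx1|/dpt_eq0 ->]; last exact: lte01.
by apply: contrapT => /dpt_ge1; rewrite leNgt dx1.
Qed.

Lemma hdist_gtP (e : \bar R) S B :
  (e < hdist (R:=R) S B)%E <-> exists2 z, S z & (e < dpt (R:=R) z B)%E.
Proof.
split=> [/ereal_sup_gt [_ [z Sz <-]]|[z Sz]]; first by exists z.
by move/lt_le_trans; apply; apply: ereal_sup_ubound; exists z.
Qed.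

Lemma hdist_eq0 S B : S !=set0 -> S `<=` B -> hdist (R:=R) S B = 0%E.
Proof.
move=> [z Sz] SB; apply/eqP; rewrite eq_le; apply/andP; split.
  by apply: ge_ereal_sup => _ [y Sy <-]; rewrite dpt_eq0 //; exact: SB.
by apply: ereal_sup_ubound; exists z => //; rewrite dpt_eq0 //; exact: SB.
Qed.

Lemma hdist_ge1 S B : ~ S `<=` B -> (1 <= hdist (R:=R) S B)%E.
Proof.
move=> /existsNP [z /not_implyP [Sz Bz]].
apply: le_trans (dpt_ge1 _ _ Bz) _.
by apply: ereal_sup_ubound; exists z.
Qed.

Lemma hdist_cvg0P (S B : nat -> set (stsp L)) : (forall n, S n !=set0) ->
  (fun n => hdist (R:=R) (S n) (B n)) @ \oo --> 0%E <->
  \forall n \near \oo, S n `<=` B n.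
Proof.
move=> S0; split=> [hS|SB].
  have hS1 : \forall n \near \oo, (hdist (R:=R) (S n) (B n) < 1)%E.
    exact: (hS _ (open_ereal_lt' lte01)).
  apply: filterS hS1 => n hS1.
  by apply: contrapT => /hdist_ge1; rewrite leNgt hS1.
by apply: cvg_near_cst; apply: filterS SB => n; exact: hdist_eq0.
Qed.

End lattice_distance.

Lemma countable_stsp (L : nat) : countable [set: stsp L].
Proof.
apply/countable_injP; exists (fun x => pickle [ffun i => x i]) => x y _ _.
move/(pcan_inj pickleK)/ffunP => xy; apply/funext => i.
by have := xy i; rewrite !ffunE.
Qed.

Section measure_facts.
Context {d : measure_display} {T : measurableType d} {R : realType}.

Lemma measurable_iter (f : T -> T) n :
  measurable_fun setT f -> measurable_fun setT (iter n f).
Proof.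
by move=> mf; elim: n => [|n IH] /=; [exact: measurable_id|exact: measurableT_comp].
Qed.

Lemma ae_forall_countable (mu : {measure set T -> \bar R}) {U : Type}
    {Q : U -> T -> Prop} : countable [set: U] ->
  (forall u, {ae mu, forall q, Q u q}) -> {ae mu, forall q, forall u, Q u q}.
Proof.
move=> /countable_injP [f f_inj] aeQ.
have aeQn : forall n, {ae mu, forall q, forall u, f u = n -> Q u q}.
  move=> n; have [[u <-]|no_u] := pselect (exists u, f u = n); last first.
    by apply: nearW => q u fu; case: no_u; exists u.
  apply: filterS (aeQ u) => q Qu v /f_inj fvu.
  by rewrite fvu ?inE.
by apply: filterS (ae_foralln aeQn) => q Qq u; exact: Qq (f u) u erefl.
Qed.

Section measure_preserving.
Variables (mu : {measure set T -> \bar R}) (f : T -> T).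
Hypothesis mf : measurable_fun setT f.
Hypothesis mu_f : forall B, measurable B -> mu (f @^-1` B) = mu B.

Lemma ae_comp (Q : T -> Prop) :
  {ae mu, forall q, Q q} -> {ae mu, forall q, Q (f q)}.
Proof.
move=> [N [mN N0 QN]]; exists (f @^-1` N); split.
- by rewrite -[_ @^-1` _]setTI; exact: mf.
- by rewrite mu_f.
- by move=> q /QN.
Qed.

Lemma ae_comp_iter n (Q : T -> Prop) :
  {ae mu, forall q, Q q} -> {ae mu, forall q, Q (iter n f q)}.
Proof. by elim: n Q => [//|n IH] Q /ae_comp /IH. Qed.

End measure_preserving.

Lemma ae_eventually_notin_cvg_mu (mu : {finite_measure set T -> \bar R})
    (F : nat -> set T) : (forall n, measurable (F n)) ->
  {ae mu, forall q, \forall n \near \oo, ~ F n q} -> mu \o F @ \oo --> 0%E.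
Proof.
move=> mF [N [mN N0 FN]].
pose G n := \bigcup_k F (n + k)%N.
have mG n : measurable (G n) by apply: bigcupT_measurable => k; exact: mF.
have G_cvg : mu \o G @ \oo --> mu (\bigcap_n G n).
  apply: nonincreasing_cvg_mu => //; first by rewrite ltey_eq fin_num_measure.
    exact: bigcapT_measurable.
  move=> n m nm; rewrite subsetEset => q [k _ Fq].
  by exists (m - n + k)%N => //; rewrite addnA subnKC.
have limsupF0 : mu (\bigcap_n G n) = 0%E.
  apply/eqP; rewrite eq_le measure_ge0 andbT -N0 le_measure ?inE //.
    exact: bigcapT_measurable.
  move=> q Gq; apply: FN => -[n0 _ notF]; have [k _ Fk] := Gq n0 I.
  exact: notF (n0 + k)%N (leq_addr _ _) Fk.
rewrite limsupF0 in G_cvg.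
apply: squeeze_cvge (cvg_cst 0%E) G_cvg; apply: nearW => n.
rewrite measure_ge0 /= le_measure ?inE //.
by move=> q Fq; exists 0%N => //; rewrite addn0.
Qed.

End measure_facts.

Section random_set.
Context {R : realType} {d : measure_display} {T : measurableType d} {L : nat}.

Lemma random_set_measurable_mem (K : T -> set (stsp L)) :
  random_set (R:=R) K -> forall x, measurable [set q | K q x].
Proof.
move=> rK x.
have -> : [set q | K q x] = [set q | (dpt (R:=R) x (K q) < 1)%E].
  by apply/seteqP; split => q /= /dpt_lt1.
by rewrite -[X in measurable X]setTI; exact: emeasurable_fun_infty_o.
Qed.

Lemma random_set_cst (B : set (stsp L)) : random_set (R:=R) (fun _ : T => B).
Proof. by move=> x; exact: measurable_cst. Qed.

End random_set.

Section attractor.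
Context {R : realType} {d : measure_display} {T : measurableType d}.
Context {P : probability T R} {L : nat} {th : T -> T}.
Context {phi : nat -> T -> stsp L -> stsp L} {A : T -> set (stsp L)}.
Hypothesis mth : measurable_fun setT th.
Hypothesis mphi : forall n x y, measurable [set q | phi n q x = y].
Hypothesis rA : random_set (R:=R) A.
Implicit Types (K : T -> set (stsp L)) (x : stsp L) (q : T).

Local Notation attr K := (attr_seq (R:=R) th phi A K).

Definition absorbed K n q := phi n q @` K q `<=` A (iter n th q).

Lemma absorbed1 x n q :
  absorbed (fun=> [set x]) n q <-> A (iter n th q) (phi n q x).
Proof. by rewrite /absorbed image_set1 sub1set inE. Qed.

Lemma attr_seq_eq0 K n q : K q !=set0 -> absorbed K n q -> attr K n q = 0%E.
Proof. by move=> [x Kx]; apply: hdist_eq0; exists (phi n q x), x. Qed.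

Lemma attr_seq_ge1 K n q : ~ absorbed K n q -> (1 <= attr K n q)%E.
Proof. exact: hdist_ge1. Qed.

Lemma attr_seq_cvg0P K q : K q !=set0 ->
  attr K ^~ q @ \oo --> 0%E <-> \forall n \near \oo, absorbed K n q.
Proof.
move=> [x Kx].
apply: (hdist_cvg0P (fun n => phi n q @` K q) (fun n => A (iter n th q))).
by move=> n; exists (phi n q x), x.
Qed.

Lemma measurable_attr_seq_gt K : random_set (R:=R) K ->
  forall n e, measurable [set q | (e < attr K n q)%E].
Proof.
move=> rK n e.
have -> : [set q | (e < attr K n q)%E] = \bigcup_x \bigcup_y
    ([set q | K q x] `&` [set q | phi n q x = y] `&`
     [set q | (e < dpt (R:=R) y (A (iter n th q)))%E]).
  apply/seteqP; split => q /=.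
    by move=> /hdist_gtP [_ [x Kx <-] gt]; exists x => //; exists (phi n q x).
  move=> [x _ [y _ [[Kx <-] gt]]].
  by apply/hdist_gtP; exists (phi n q x) => //; exists x.
apply: countable_bigcupT_measurable (countable_stsp L) _ => x.
apply: countable_bigcupT_measurable (countable_stsp L) _ => y.
apply: measurableI; first apply: measurableI.
- exact: random_set_measurable_mem rK x.
- exact: mphi.
- rewrite -[X in measurable X]setTI; apply: emeasurable_fun_o_infty => //.
  exact: measurableT_comp (rA y) (measurable_iter _ n mth).
Qed.

Lemma not_absorbed_attr_seq_gt K n : (forall q, K q !=set0) ->
  [set q | ~ absorbed K n q] = [set q | ((2^-1)%:E < attr K n q)%E].
Proof.
move=> K0; apply/seteqP; split => q /=.
  by move/attr_seq_ge1; apply: lt_le_trans; rewrite lte_fin invf_lt1 ?ltr1n.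
by move=> gt absK; move: gt; rewrite attr_seq_eq0 // lte_fin ltNge invr_ge0 ler0n.
Qed.

Lemma measurable_not_absorbed K n : random_set (R:=R) K ->
  (forall q, K q !=set0) -> measurable [set q | ~ absorbed K n q].
Proof.
by move=> rK K0; rewrite not_absorbed_attr_seq_gt //; exact: measurable_attr_seq_gt.
Qed.

Lemma cvg_in_prob_attr_seqP K : random_set (R:=R) K -> (forall q, K q !=set0) ->
  cvg_in_prob P (attr K) <->
  (fun n => P [set q | ~ absorbed K n q]) @ \oo --> 0%E.
Proof.
move=> rK K0; split=> [attr_cvg|escape_cvg e e0].
  under eq_fun do rewrite not_absorbed_attr_seq_gt //.
  by apply: attr_cvg; rewrite invr_gt0.
apply: squeeze_cvge (cvg_cst 0%E) escape_cvg; apply: nearW => n.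
rewrite measure_ge0 le_measure ?inE //.
- exact: measurable_attr_seq_gt.
- exact: measurable_not_absorbed.
- by move=> q /= gt absK; move: gt; rewrite attr_seq_eq0 // lte_fin ltNge (ltW e0).
Qed.

Lemma cvg_as_attr_seqP K : (forall q, K q !=set0) ->
  cvg_as P (attr K) <-> {ae P, forall q, \forall n \near \oo, absorbed K n q}.
Proof.
by move=> K0; split; apply: filterS => q; rewrite (attr_seq_cvg0P K q (K0 q)).
Qed.

Lemma cvg_as_in_prob_attr_seq K : random_set (R:=R) K ->
  (forall q, K q !=set0) -> cvg_as P (attr K) -> cvg_in_prob P (attr K).
Proof.
move=> rK K0 /(cvg_as_attr_seqP K K0) ev_absK.
apply/(cvg_in_prob_attr_seqP K rK K0).
apply: (ae_eventually_notin_cvg_mu _ (fun n => [set q | ~ absorbed K n q])).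
  by move=> n; exact: measurable_not_absorbed.
by apply: filterS ev_absK => q; apply: filterS => n absK /=; apply.
Qed.

Lemma cvg_as_attr_seq_finite K :
  (forall q, K q !=set0 /\ finite_set (K q)) ->
  (forall x, {ae P, forall q, \forall n \near \oo, A (iter n th q) (phi n q x)}) ->
  cvg_as P (attr K).
Proof.
move=> Kfin /(ae_forall_countable P (countable_stsp L)) ev_A.
apply/(cvg_as_attr_seqP K (fun q => (Kfin q).1)); apply: filterS ev_A => q ev_A.
have [_ /finite_seqP [s Ks]] := Kfin q.
have ev_s : \forall n \near \oo, forall x, x \in s -> A (iter n th q) (phi n q x).
  elim: s {Ks} => [|x s IH]; first by apply: nearW => n x; rewrite in_nil.
  apply: filterS2 (ev_A x) IH => n Ax As y.
  by rewrite in_cons => /predU1P [->|/As].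
by apply: filterS ev_s => n As _ [x + <-]; rewrite Ks => /As.
Qed.

Hypothesis th_pres : forall B, measurable B -> P (th @^-1` B) = P B.
Hypothesis coc : forall n m q, phi (n + m)%N q = phi n (iter m th q) \o phi m q.
Hypothesis inv : phi_invariant P th phi A.

Lemma ae_invariant_orbit : {ae P, forall q, forall m,
  phi 1 (iter m th q) @` A (iter m th q) = A (iter m.+1 th q)}.
Proof.
apply: ae_foralln => m.
have inv1 := inv 1 isT.
exact: (ae_comp_iter P th mth th_pres m (fun q => phi 1 q @` A q = A (th q)) inv1).
Qed.

Lemma absorbed_forward q x m :
  (forall m, phi 1 (iter m th q) @` A (iter m th q) = A (iter m.+1 th q)) ->
  A (iter m th q) (phi m q x) ->
  forall n, (m <= n)%N -> A (iter n th q) (phi n q x).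
Proof.
move=> invq Am; elim=> [|n IH]; first by rewrite leqn0 => /eqP <-.
rewrite leq_eqVlt => /predU1P [<- //|/IH An].
have -> : phi n.+1 q = phi 1 (iter n th q) \o phi n q by rewrite -coc.
by rewrite -invq; exists (phi n q x).
Qed.

Lemma ae_absorbed_of_cvg_in_prob x :
  cvg_in_prob P (attr (fun=> [set x])) ->
  {ae P, forall q, \forall n \near \oo, A (iter n th q) (phi n q x)}.
Proof.
have x0 : forall q : T, [set x] !=set0 by exists x.
move=> /(cvg_in_prob_attr_seqP _ (random_set_cst _) x0) escape_cvg.
pose never := \bigcap_n [set q | ~ absorbed (fun=> [set x]) n q].
have mnever : measurable never.
  apply: bigcapT_measurable => n.
  exact: measurable_not_absorbed (random_set_cst _) x0.
have never0 : P never = 0%E.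
  apply/eqP; rewrite eq_le measure_ge0 andbT; apply: cvge_ge escape_cvg.
  apply: nearW => n; rewrite le_measure ?inE //; last by move=> q /(_ n I).
  exact: measurable_not_absorbed (random_set_cst _) x0.
have ae_not_never : {ae P, forall q, ~ never q}.
  by exists never; split => // q /= /contrapT.
apply: filterS2 ae_invariant_orbit ae_not_never => q invq not_never.
have [m Am] : exists m, A (iter m th q) (phi m q x).
  apply: contrapT => none; apply: not_never => m _ /absorbed1 Am.
  by apply: none; exists m.
exact: filterS (absorbed_forward _ _ _ invq Am) (nbhs_infty_ge m).
Qed.

End attractor.

Theorem theorem4p3 (R : realType) (d : measure_display) (T : measurableType d)
    (P : probability T R) (L : nat) (th : T -> T)
    (phi : nat -> T -> stsp L -> stsp L) (A : T -> set (stsp L)) :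
  mpds P th ->
  cocycle th phi ->
  random_set (R:=R) A ->
  (forall q, A q !=set0 /\ finite_set (A q)) ->
  phi_invariant P th phi A ->
  let I := forall B : set (stsp L), B !=set0 -> finite_set B ->
             cvg_in_prob P (attr_seq (R:=R) th phi A (fun _ => B)) in
  let II := forall B : set (stsp L), B !=set0 -> finite_set B ->
             cvg_as P (attr_seq (R:=R) th phi A (fun _ => B)) in
  let III := forall x : stsp L,
             cvg_as P (attr_seq (R:=R) th phi A (fun _ => [set x])) in
  let IV := forall x : stsp L,
             cvg_in_prob P (attr_seq (R:=R) th phi A (fun _ => [set x])) in
  let V := forall K : T -> set (stsp L), finite_random_set (R:=R) K ->
             cvg_in_prob P (attr_seq (R:=R) th phi A K) in
  [/\ I <-> II, II <-> III, III <-> IV & IV <-> V].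
Proof.
move=> [_ mth th_pres _] [mphi _ coc] rA _ inv I II III IV V.
have set1_fin (x : stsp L) (q : T) : [set x] !=set0 /\ finite_set [set x].
  by split; [exists x | exact: finite_set1].
have IV_absorbed : IV -> forall x,
    {ae P, forall q, \forall n \near \oo, A (iter n th q) (phi n q x)}.
  move=> h x.
  exact: ae_absorbed_of_cvg_in_prob mth mphi rA th_pres coc inv x (h x).
have I_IV : I -> IV by move=> h x; apply: h; [exists x | exact: finite_set1].
have II_III : II -> III by move=> h x; apply: h; [exists x | exact: finite_set1].
have II_I : II -> I.
  move=> h B B0 Bfin.
  apply: (cvg_as_in_prob_attr_seq mth mphi rA _ (random_set_cst B) (fun=> B0)).
  exact: h.
have III_II : III -> II.
  move=> h B B0 Bfin; apply: cvg_as_attr_seq_finite => [//|x].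
  have /(cvg_as_attr_seqP _ (fun q => (set1_fin x q).1)) := h x.
  by apply: filterS => q; apply: filterS => n /absorbed1.
have IV_III : IV -> III.
  by move=> h x; exact: cvg_as_attr_seq_finite (set1_fin x) (IV_absorbed h).
have IV_V : IV -> V.
  move=> h K [rK Kfin].
  apply: (cvg_as_in_prob_attr_seq mth mphi rA K rK (fun q => (Kfin q).1)).
  exact: cvg_as_attr_seq_finite Kfin (IV_absorbed h).
have V_IV : V -> IV.
  by move=> h x; apply: h; split; [exact: random_set_cst | exact: set1_fin].
by split; split; auto.
Qed.
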